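(* Let $|\psi_{ABC}\rangle\in\mathbb{C}^2\otimes\mathbb{C}^2\otimes\mathbb{C}^d$ be a pure state that is entangled with respect to the bipartition $AB|C$. Then there exist projective measurements $\{P_{a|0}\}_{a=0}^1,\{P_{a|1}\}_{a=0}^1$ on subsystem $A$ and $\{Q_{b|0}\}_{b=0}^1,\{Q_{b|1}\}_{b=0}^1$ on subsystem $B$ such that the assemblage $\Sigma=\{\sigma_{ab|xy}\}$, $\sigma_{ab|xy}=\mathrm{Tr}_{AB}\big((P_{a|x}\otimes Q_{b|y}\otimes\mathbb{1})|\psi_{ABC}\rangle\langle\psi_{ABC}|\big)$ ($a,b,x,y\in\{0,1\}$), is on the edge of the set of no-signaling assemblages.
   Context: Scenario with two untrusted parties, binary outcomes $a,b\in\{0,1\}$ and binary settings $x,y\in\{0,1\}$, trusted system $\mathbb{C}^d$. A no-signaling assemblage is a collection of positive semidefinite operators $\sigma_{ab|xy}$ on $\mathbb{C}^d$ with $\sum_{a,b}\sigma_{ab|xy}=\rho$ independent of $x,y$ and of trace one, $\sum_b\sigma_{ab|xy}$ independent of $y$, and $\sum_a\sigma_{ab|xy}$ independent of $x$. An LHS assemblage is one of the form $\sigma_{ab|xy}=\sum_j q_j p_j(a|x)p'_j(b|y)\rho_j$ with probability weights $q_j$, density operators $\rho_j$ and conditional probability distributions $p_j,p'_j$. A no-signaling assemblage $\Sigma$ is on the edge if whenever $\Sigma=\epsilon\Sigma_1+(1-\epsilon)\Sigma_2$ with $\epsilon\in[0,1]$, $\Sigma_1$ LHS and $\Sigma_2$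 no-signaling, necessarily $\epsilon=0$. *)

From HB Require Import structures.
From mathcomp Require Import all_boot all_order all_algebra.
From mathcomp Require Import reals.
From mathcomp Require Import complex.
Set Implicit Arguments. Unset Strict Implicit. Unset Printing Implicit Defensive.
Import Order.TTheory GRing.Theory Num.Theory.
Local Open Scope ring_scope.

Section Defs.
Variable R : realType.
Local Notation C := R[i].

Definition adjmx m n (A : 'M[C]_(m, n)) : 'M[C]_(n, m) :=
  \matrix_(i, j) (A j i)^*.

Definition hermitian n (A : 'M[C]_n) : Prop := adjmx A = A.

Definition psd n (A : 'M[C]_n) : Prop :=
  hermitian A /\ forall v : 'cV[C]_n, 0 <= (adjmx v *m A *m v) 0 0.

Definition density n (rho : 'M[C]_n) : Prop := psd rho /\ \tr rho = 1.

(* assemblage with binary outcomes a b and settings x y: sigma a b x y *)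
Definition assemblage d := bool -> bool -> bool -> bool -> 'M[C]_d.

Definition no_signaling d (sigma : assemblage d) : Prop :=
  (forall a b x y, psd (sigma a b x y)) /\
  (exists rho : 'M[C]_d, \tr rho = 1 /\
     forall x y, \sum_(a : bool) \sum_(b : bool) sigma a b x y = rho) /\
  (forall a x y y', \sum_(b : bool) sigma a b x y = \sum_(b : bool) sigma a b x y') /\
  (forall b x x' y, \sum_(a : bool) sigma a b x y = \sum_(a : bool) sigma a b x' y).

Definition cond_prob (p : bool -> bool -> C) : Prop :=
  (forall a x, 0 <= p a x) /\ (forall x, \sum_(a : bool) p a x = 1).

(* local hidden state assemblage (finite decomposition) *)
Definition LHS d (sigma : assemblage d) : Prop :=
  exists (n : nat) (q : 'I_n -> C) (p p' : 'I_n -> bool -> bool -> C)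
         (rho : 'I_n -> 'M[C]_d),
    (forall j, 0 <= q j) /\ \sum_(j < n) q j = 1 /\
    (forall j, density (rho j)) /\
    (forall j, cond_prob (p j)) /\ (forall j, cond_prob (p' j)) /\
    forall a b x y,
      sigma a b x y = \sum_(j < n) (q j * p j a x * p' j b y) *: rho j.

Definition on_edge d (sigma : assemblage d) : Prop :=
  no_signaling sigma /\
  forall (eps : C) (sigma1 sigma2 : assemblage d),
    0 <= eps <= 1 -> LHS sigma1 -> no_signaling sigma2 ->
    (forall a b x y,
       sigma a b x y = eps *: sigma1 a b x y + (1 - eps) *: sigma2 a b x y) ->
    eps = 0.

(* pure states on C^2 (x) C^2 (x) C^d, given by coordinates psi i j k *)
Definition tri_state d := 'I_2 -> 'I_2 -> 'I_d -> C.

Definition normalized d (psi : tri_state d) : Prop :=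
  \sum_(i < 2) \sum_(j < 2) \sum_(k < d) psi i j k * (psi i j k)^* = 1.

Definition product_AB_C d (psi : tri_state d) : Prop :=
  exists (phi : 'I_2 -> 'I_2 -> C) (chi : 'I_d -> C),
    forall i j k, psi i j k = phi i j * chi k.

Definition entangled_AB_C d (psi : tri_state d) : Prop := ~ product_AB_C psi.

Definition projective_meas (P : bool -> 'M[C]_2) : Prop :=
  (forall a, hermitian (P a) /\ P a *m P a = P a) /\
  \sum_(a : bool) P a = 1%:M.

(* sigma_{ab|xy} = Tr_AB((P_{a|x} (x) Q_{b|y} (x) 1) |psi><psi|), written in
   coordinates: entry (k,l) equals
   sum_{i,j,i',j'} P(i,i') Q(j,j') psi(i',j',k) conj(psi(i,j,l)). *)
Definition induced_assemblage d (psi : tri_state d)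
  (P Q : bool -> bool -> 'M[C]_2) : assemblage d :=
  fun a b x y => \matrix_(k, l)
    \sum_(i < 2) \sum_(j < 2) \sum_(i' < 2) \sum_(j' < 2)
       P a x i i' * Q b y j j' * psi i' j' k * (psi i j l)^*.

End Defs.

(* Measure Z for setting 0 and X for setting 1 on both qubits.  Every
   sigma_{ab|xy} is then rank one, along the vector w_{ab|xy} of C^d obtained
   by contracting psi with the product vector of outcomes (a, b).  If
   sigma = eps sigma1 + (1 - eps) sigma2 with sigma1 LHS and eps > 0, a hidden
   state rho_j of positive weight feeds, for every pair of settings, some
   outcome pair (a_x, b_y); so its support lies in the line of each of the four
   vectors w_{a_x b_y|xy}, which are therefore all proportional to one g.  As
   the four product vectors of outcomes span C^2 (x) C^2, psi = phi (x) g,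
   contradicting entanglement.  No-signaling holds for any measurements. *)

From Pilot Require Import Defs.
From HB Require Import structures.
From mathcomp Require Import all_boot all_order all_algebra.
From mathcomp Require Import reals complex ring.
Import Order.TTheory GRing.Theory Num.Theory.
Local Open Scope ring_scope.

Section Edge.
Variable R : realType.
Local Notation C := R[i].

Definition inner {n} (u v : 'I_n -> C) : C := \sum_k (u k)^* * v k.

Definition sform {n} (A : 'M[C]_n) (u v : 'I_n -> C) : C :=
  \sum_k \sum_l (u k)^* * A k l * v l.

Definition rank1 {n} (c : C) (w : 'I_n -> C) : 'M[C]_n :=
  \matrix_(k, l) (c * w k * (w l)^*).

Definition unitv {n} (m : 'I_n) : 'I_n -> C := fun r => (r == m)%:R.

Lemma sum_unitv {n} (F : 'I_n -> C) m : \sum_r unitv m r * F r = F m.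
Proof.
rewrite (bigD1 m) //= /unitv eqxx mul1r big1 ?addr0 // => r /negbTE ->.
by rewrite mul0r.
Qed.

Lemma sform_mx {n} (A : 'M[C]_n) (u : 'I_n -> C) :
  (adjmx (\col_k u k) *m A *m \col_k u k) 0 0 = sform A u u.
Proof.
rewrite mxE /sform.
under eq_bigr => l _ do rewrite !mxE big_distrl /=.
rewrite exchange_big /=; apply: eq_bigr => k _; apply: eq_bigr => l _.
by rewrite !mxE.
Qed.

Lemma psd_sform_ge0 {n} (A : 'M[C]_n) (u : 'I_n -> C) :
  psd A -> 0 <= sform A u u.
Proof. by move=> [_ A_ge0]; rewrite -sform_mx. Qed.

Lemma hermitian_sform_conj {n} (A : 'M[C]_n) (u v : 'I_n -> C) :
  Defs.hermitian A -> sform A u v = (sform A v u)^*.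
Proof.
move=> hA; rewrite /sform rmorph_sum /= exchange_big /=; apply: eq_bigr => k _.
rewrite rmorph_sum /=; apply: eq_bigr => l _.
by rewrite -{1}hA mxE !rmorphM /= conjCK; ring.
Qed.

Lemma sform_lin_comb {n} (A : 'M[C]_n) (z y : 'I_n -> C) (al be : C) :
  sform A (fun k => al * z k + be * y k) (fun k => al * z k + be * y k) =
  al^* * al * sform A z z + al^* * be * sform A z y
  + be^* * al * sform A y z + be^* * be * sform A y y.
Proof.
rewrite /sform !mulr_sumr -!big_split; apply: eq_bigr => k _.
rewrite !mulr_sumr -!big_split; apply: eq_bigr => l _ /=.
rewrite rmorphD !rmorphM /=; ring.
Qed.

(* Cauchy-Schwarz in disguise: test positivity on (Q + 1) z - b y,
   with b = <y, A z> and Q = <y, A y>. *)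
Lemma psd_sform_null {n} {A : 'M[C]_n} {z : 'I_n -> C} :
  psd A -> sform A z z = 0 -> forall y, sform A y z = 0.
Proof.
move=> hA hz y; set b := sform A y z; set Q := sform A y y.
have Q_ge0 : 0 <= Q by exact: psd_sform_ge0.
have Q_real : Q^* = Q by apply: conj_Creal; exact: ger0_real.
have hzy : sform A z y = b^* by rewrite (hermitian_sform_conj _ z y hA.1).
have := psd_sform_ge0 A (fun k => (Q + 1) * z k + (- b) * y k) hA.
rewrite sform_lin_comb hz hzy -/b -/Q rmorphD /= Q_real rmorph1 rmorphN.
have -> : (Q + 1) * (Q + 1) * 0 + (Q + 1) * - b * b^* + - b^* * (Q + 1) * b
   + - b^* * - b * Q = - ((Q + 2%:R) * (b * b^*)) by ring.
rewrite oppr_ge0 pmulr_rle0; last by rewrite ltr_wpDl // ltr0n.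
move=> bb_le0; have : b * b^* = 0.
  by apply/eqP; rewrite eq_le bb_le0 mul_conjC_ge0.
by move/eqP; rewrite mulf_eq0 conjC_eq0 orbb => /eqP.
Qed.

Lemma sformD {n} (A B : 'M[C]_n) (u v : 'I_n -> C) :
  sform (A + B) u v = sform A u v + sform B u v.
Proof.
rewrite /sform -big_split; apply: eq_bigr => k _.
rewrite -big_split; apply: eq_bigr => l _ /=; rewrite mxE; ring.
Qed.

Lemma sformZ {n} (c : C) (A : 'M[C]_n) (u v : 'I_n -> C) :
  sform (c *: A) u v = c * sform A u v.
Proof.
rewrite /sform mulr_sumr; apply: eq_bigr => k _.
rewrite mulr_sumr; apply: eq_bigr => l _ /=; rewrite mxE; ring.
Qed.

Lemma sform_sum {n m} (A : 'I_m -> 'M[C]_n) (u v : 'I_n -> C) :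
  sform (\sum_(j < m) A j) u v = \sum_(j < m) sform (A j) u v.
Proof.
have sform0 : sform 0 u v = 0.
  rewrite /sform big1 // => k _.
  by rewrite big1 // => l _; rewrite mxE mulr0 mul0r.
exact: (big_morph (fun M => sform M u v) (fun M N => sformD M N u v) sform0).
Qed.

Lemma sform_unitvl {n} (A : 'M[C]_n) (v : 'I_n -> C) m :
  sform A (unitv m) v = \sum_l A m l * v l.
Proof.
rewrite /sform (bigD1 m) //= [X in _ + X]big1 ?addr0 => [|r hr].
  by rewrite /unitv eqxx rmorph1; apply: eq_bigr => l _; rewrite mul1r.
by rewrite big1 // => l _; rewrite /unitv (negbTE hr) rmorph0 !mul0r.
Qed.

Lemma sform_rank1 {n} (c : C) (w z : 'I_n -> C) :
  sform (rank1 c w) z z = c * inner z w * (inner z w)^*.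
Proof.
rewrite /inner rmorph_sum /= -mulrA big_distrlr mulr_sumr /sform.
apply: eq_bigr => k _; rewrite mulr_sumr; apply: eq_bigr => l _.
by rewrite !mxE !rmorphM /= conjCK; ring.
Qed.

Lemma rank1_psd {n} (c : C) (w : 'I_n -> C) : 0 <= c -> psd (rank1 c w).
Proof.
move=> c_ge0; have c_real : c^* = c by apply: conj_Creal; exact: ger0_real.
split=> [|v].
  by apply/matrixP => k l; rewrite !mxE !rmorphM /= conjCK c_real; ring.
have -> : v = \col_k v k 0 by apply/matrixP => k l; rewrite mxE ord1.
by rewrite sform_mx sform_rank1 -mulrA mulr_ge0 ?mul_conjC_ge0.
Qed.

Lemma sform_null_mix {n m} (eps : C) (c : 'I_m -> C) (rho : 'I_m -> 'M[C]_n)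
    (tau : 'M[C]_n) z j :
  0 <= eps <= 1 -> eps != 0 -> (forall i, 0 <= c i) ->
  (forall i, psd (rho i)) -> psd tau -> c j != 0 ->
  sform (eps *: \sum_i c i *: rho i + (1 - eps) *: tau) z z = 0 ->
  sform (rho j) z z = 0.
Proof.
move=> /andP[eps_ge0 eps_le1] eps_neq0 c_ge0 rho_psd tau_psd cj_neq0.
rewrite sformD !sformZ sform_sum.
have terms_ge0 i : 0 <= sform (c i *: rho i) z z.
  by rewrite sformZ mulr_ge0 ?psd_sform_ge0.
have mix_ge0 : 0 <= (1 - eps) * sform tau z z.
  by rewrite mulr_ge0 ?subr_ge0 ?psd_sform_ge0.
have sum_ge0 : 0 <= eps * \sum_i sform (c i *: rho i) z z.
  by rewrite mulr_ge0 ?sumr_ge0.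
move/eqP; rewrite paddr_eq0 // => /andP[+ _].
rewrite mulf_eq0 (negbTE eps_neq0) /= => /eqP.
move=> /(psumr_eq0P (fun i _ => terms_ge0 i)).
by move=> /(_ j isT)/eqP; rewrite sformZ mulf_eq0 (negbTE cj_neq0) => /eqP.
Qed.

Lemma psd_rank1_support {n} (A : 'M[C]_n) (w : 'I_n -> C) :
  psd A -> (forall z, inner z w = 0 -> sform A z z = 0) ->
  forall m k l, w l * (A m k)^* = w k * (A m l)^*.
Proof.
move=> hA w_supp m k l.
pose z r := unitv k r * (w l)^* - unitv l r * (w k)^*.
have z_orth : inner z w = 0.
  rewrite /inner (eq_bigr (fun r => unitv k r * (w l * w r)
                                    - unitv l r * (w k * w r))).
    by rewrite sumrB !sum_unitv mulrC subrr.
  move=> r _; rewrite /z /unitv rmorphB !rmorphM /= !conjCK !rmorph_nat.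
  by ring.
have := psd_sform_null hA (w_supp z z_orth) (unitv m).
rewrite sform_unitvl (eq_bigr (fun r => unitv k r * (A m r * (w l)^*)
                                       - unitv l r * (A m r * (w k)^*))).
  2: by move=> r _; rewrite /z; ring.
rewrite sumrB !sum_unitv => /(congr1 Num.conj)/eqP.
rewrite rmorphB !rmorphM /= !conjCK rmorph0 subr_eq0 mulrC => /eqP->.
by rewrite mulrC.
Qed.

Lemma sum_ord2 (F : 'I_2 -> C) : \sum_(i < 2) F i = F ord0 + F ord_max.
Proof. by rewrite big_ord_recr big_ord1; congr (F _ + _); apply: val_inj. Qed.

Lemma forall_ord2 (P : 'I_2 -> Prop) : P ord0 -> P ord_max -> forall i, P i.
Proof.
move=> P0 P1 [[|[|//]] i_lt2].
  by rewrite (_ : Ordinal i_lt2 = ord0) //; apply: val_inj.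
by rewrite (_ : Ordinal i_lt2 = ord_max) //; apply: val_inj.
Qed.

Section InducedAssemblage.
Variable d : nat.
Implicit Types (psi : tri_state R d) (A B : 'M[C]_2).

Definition cond_state psi A B : 'M[C]_d := \matrix_(k, l)
  \sum_(i < 2) \sum_(j < 2) \sum_(i' < 2) \sum_(j' < 2)
     A i i' * B j j' * psi i' j' k * (psi i j l)^*.

Lemma cond_stateDl psi A1 A2 B :
  cond_state psi (A1 + A2) B = cond_state psi A1 B + cond_state psi A2 B.
Proof. by apply/matrixP => k l; rewrite !mxE !sum_ord2 !mxE; ring. Qed.

Lemma cond_stateDr psi A B1 B2 :
  cond_state psi A (B1 + B2) = cond_state psi A B1 + cond_state psi A B2.
Proof. by apply/matrixP => k l; rewrite !mxE !sum_ord2 !mxE; ring. Qed.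

Lemma cond_state_suml psi (P : bool -> 'M[C]_2) B :
  \sum_a P a = 1%:M -> \sum_a cond_state psi (P a) B = cond_state psi 1%:M B.
Proof. by move=> <-; rewrite !big_bool cond_stateDl. Qed.

Lemma cond_state_sumr psi A (Q : bool -> 'M[C]_2) :
  \sum_b Q b = 1%:M -> \sum_b cond_state psi A (Q b) = cond_state psi A 1%:M.
Proof. by move=> <-; rewrite !big_bool cond_stateDr. Qed.

Lemma cond_state_tr psi : normalized psi -> \tr (cond_state psi 1%:M 1%:M) = 1.
Proof.
move=> psi_normed; rewrite -[RHS]psi_normed /mxtrace !sum_ord2 -!big_split /=.
by apply: eq_bigr => k _; rewrite !mxE !sum_ord2 !mxE /= ?mulr1n ?mulr0n; ring.
Qed.

Lemma induced_assemblage_no_signaling psi (P Q : bool -> bool -> 'M[C]_2) :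
  normalized psi ->
  (forall x, \sum_a P a x = 1%:M) -> (forall y, \sum_b Q b y = 1%:M) ->
  (forall a b x y, psd (induced_assemblage psi P Q a b x y)) ->
  no_signaling (induced_assemblage psi P Q).
Proof.
move=> psi_normed P_sum Q_sum sigma_psd.
have sum_b a x y :
    \sum_b induced_assemblage psi P Q a b x y = cond_state psi (P a x) 1%:M.
  exact: (cond_state_sumr _ _ _ (Q_sum y)).
have sum_a b x y :
    \sum_a induced_assemblage psi P Q a b x y = cond_state psi 1%:M (Q b y).
  exact: (cond_state_suml _ _ _ (P_sum x)).
split; [exact: sigma_psd | split; [|split]].
- exists (cond_state psi 1%:M 1%:M); split; first exact: cond_state_tr.
  move=> x y; under eq_bigr do rewrite sum_b.
  exact: (cond_state_suml _ _ _ (P_sum x)).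
- by move=> a x y y'; rewrite !sum_b.
- by move=> b x x' y; rewrite !sum_a.
Qed.

End InducedAssemblage.

(* Setting 0 measures in the computational basis, setting 1 in the Hadamard
   basis (1, 1)/sqrt 2, (1, -1)/sqrt 2; the square root is moved into the
   weight so that all vector entries are real. *)
Definition zx_vec (a x : bool) (i : 'I_2) : C :=
  if x then (if a && (i == ord_max) then -1 else 1) else (i == a :> nat)%:R.

Definition zx_weight (x : bool) : C := if x then 2^-1 else 1.

Definition zx_proj (a x : bool) : 'M[C]_2 :=
  \matrix_(i, j) (zx_weight x * zx_vec a x i * zx_vec a x j).

Lemma conj_zx_vec a x i : (zx_vec a x i)^* = zx_vec a x i.
Proof.
rewrite /zx_vec; case: x; last exact: rmorph_nat.
by case: ifP => _; rewrite ?rmorphN1 ?rmorph1.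
Qed.

Lemma conj_zx_weight x : (zx_weight x)^* = zx_weight x.
Proof. by case: x; rewrite /= ?rmorph1 // fmorphV rmorph_nat. Qed.

Lemma zx_weight_ge0 x : 0 <= zx_weight x.
Proof. by case: x; rewrite /= ?ler01 // invr_ge0 ler0n. Qed.

Lemma zx_proj_meas x : projective_meas (fun a => zx_proj a x).
Proof.
split=> [a|]; first split.
- apply/matrixP => i j; rewrite !mxE !rmorphM /= conj_zx_weight !conj_zx_vec.
  by rewrite mulrAC.
- apply/matrixP => i j; rewrite !mxE sum_ord2 !mxE.
  by move: i j; apply: forall_ord2; apply: forall_ord2; case: a; case: x;
    rewrite /zx_vec /=; field.
- apply/matrixP => i j; rewrite summxE big_bool !mxE.
  by move: i j; apply: forall_ord2; apply: forall_ord2; case: x;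
    rewrite /zx_vec /=; field.
Qed.

Definition post_vec {d} (psi : tri_state R d) a x b y (k : 'I_d) : C :=
  \sum_(i < 2) \sum_(j < 2) zx_vec a x i * zx_vec b y j * psi i j k.

Lemma induced_zx_rank1 d (psi : tri_state R d) a b x y :
  induced_assemblage psi zx_proj zx_proj a b x y =
  rank1 (zx_weight x * zx_weight y) (post_vec psi a x b y).
Proof.
apply/matrixP => k l; rewrite !mxE /post_vec !sum_ord2 !mxE.
by rewrite !rmorphD !rmorphM /= !conj_zx_vec; ring.
Qed.

Lemma zx_vec_separating (b b' : bool) (r : 'I_2 -> C) :
  \sum_j zx_vec b false j * r j = 0 -> \sum_j zx_vec b' true j * r j = 0 ->
  forall j, r j = 0.
Proof.
rewrite !sum_ord2 /zx_vec /=.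
case: b; case: b' => /=; rewrite ?mul1r ?mul0r ?add0r ?addr0 ?mulN1r => h1 h2.
- by rewrite h1 subr0 in h2; apply: forall_ord2.
- by rewrite h1 addr0 in h2; apply: forall_ord2.
- move: h2; rewrite h1 sub0r => /eqP; rewrite oppr_eq0 => /eqP.
  by apply: forall_ord2.
- by rewrite h1 add0r in h2; apply: forall_ord2.
Qed.

Lemma zx_tensor_separating (ax bx : bool -> bool) (N : 'I_2 -> 'I_2 -> C) :
  (forall x y, \sum_(i < 2) \sum_(j < 2)
     zx_vec (ax x) x i * zx_vec (bx y) y j * N i j = 0) ->
  forall i j, N i j = 0.
Proof.
move=> N_orth.
have row_orth x : forall j, \sum_(i < 2) zx_vec (ax x) x i * N i j = 0.
  apply: (zx_vec_separating (bx false) (bx true)).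
    rewrite -[RHS](N_orth x false) exchange_big; apply: eq_bigr => j _.
    by rewrite mulr_sumr; apply: eq_bigr => i _; ring.
  rewrite -[RHS](N_orth x true) exchange_big; apply: eq_bigr => j _.
  by rewrite mulr_sumr; apply: eq_bigr => i _; ring.
by move=> i j; move: i; apply: (zx_vec_separating (ax false) (ax true)).
Qed.

Lemma exists_neq0_of_sum1 {I : finType} {F : I -> C} :
  \sum_i F i = 1 -> exists i, F i != 0.
Proof.
move=> F_sum; case: (pickP (fun i => F i != 0)) => [i Fi_neq0|F_eq0].
  by exists i.
suff : (1 : C) == 0 by rewrite oner_eq0.
by rewrite -F_sum big1 // => i _; apply/eqP/negbFE/F_eq0.
Qed.

Lemma cond_prob_support {p : bool -> bool -> C} :
  cond_prob p -> exists f : bool -> bool, forall x, p (f x) x != 0.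
Proof.
move=> [_ p_sum].
apply: (@fin_all_exists _ (fun=> bool) (fun x a => p a x != 0)) => x.
exact: exists_neq0_of_sum1.
Qed.

Lemma product_of_post_vec_proportional {d} (psi : tri_state R d)
    (ax bx : bool -> bool) (g : 'I_d -> C) m :
  g m != 0 ->
  (forall x y k, post_vec psi (ax x) x (bx y) y k * g m =
                 post_vec psi (ax x) x (bx y) y m * g k) ->
  product_AB_C psi.
Proof.
move=> gm_neq0 post_prop; exists (fun i j => psi i j m / g m), g => i j k.
have : psi i j k * g m - psi i j m * g k = 0.
  apply: (zx_tensor_separating ax bx
            (fun i j => psi i j k * g m - psi i j m * g k)).
  move=> x y; rewrite -[RHS](subrr (post_vec psi (ax x) x (bx y) y k * g m)).
  by rewrite {2}post_prop /post_vec !sum_ord2; ring.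
move/eqP; rewrite subr_eq0 => /eqP psi_prop.
by rewrite -(mulfK gm_neq0 (psi i j k)) psi_prop mulrAC.
Qed.

Lemma zx_assemblage_mix_product {d} {psi : tri_state R d} {eps : C}
    {sigma1 sigma2 : assemblage R d} :
  0 <= eps <= 1 -> eps != 0 -> Defs.LHS sigma1 -> no_signaling sigma2 ->
  (forall a b x y, induced_assemblage psi zx_proj zx_proj a b x y =
                   eps *: sigma1 a b x y + (1 - eps) *: sigma2 a b x y) ->
  product_AB_C psi.
Proof.
move=> eps_01 eps_neq0 [n [q [p [p' [rho [q_ge0 [q_sum [rho_dens]]]]]]]].
move=> [p_prob [p'_prob sigma1E]] [sigma2_psd _] sigmaE.
have [j qj_neq0] := exists_neq0_of_sum1 q_sum.
have [ax p_ax] := cond_prob_support (p_prob j).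
have [bx p'_bx] := cond_prob_support (p'_prob j).
have [rho_psd rho_tr] := rho_dens j.
have [m rho_mm] : exists m, rho j m m != 0 by apply: exists_neq0_of_sum1.
apply: (product_of_post_vec_proportional psi ax bx (fun k => (rho j m k)^*) m).
  by rewrite conjC_eq0.
move=> x y k.
apply: (psd_rank1_support _ (post_vec psi (ax x) x (bx y) y) rho_psd).
move=> z z_orth.
apply: (sform_null_mix _ (fun i => q i * p i (ax x) x * p' i (bx y) y) _ _ _ _
          eps_01 eps_neq0 _ _ (sigma2_psd (ax x) (bx y) x y)).
- by move=> i; rewrite !mulr_ge0 ?(p_prob i).1 ?(p'_prob i).1.
- by move=> i; case: (rho_dens i).
- by rewrite !mulf_neq0.
- by rewrite -sigma1E -sigmaE induced_zx_rank1 sform_rank1 z_orth mulr0 mul0r.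
Qed.

Lemma zx_assemblage_on_edge {d} (psi : tri_state R d) :
  normalized psi -> entangled_AB_C psi ->
  on_edge (induced_assemblage psi zx_proj zx_proj).
Proof.
move=> psi_normed psi_ent; split.
  apply: induced_assemblage_no_signaling => // [x|y|a b x y].
  - exact: (zx_proj_meas x).2.
  - exact: (zx_proj_meas y).2.
  - rewrite induced_zx_rank1; apply: rank1_psd.
    by rewrite mulr_ge0 ?zx_weight_ge0.
move=> eps sigma1 sigma2 eps_01 sigma1_LHS sigma2_NS sigmaE.
apply/eqP/negPn/negP => eps_neq0; apply: psi_ent.
exact: (zx_assemblage_mix_product eps_01 eps_neq0 sigma1_LHS sigma2_NS sigmaE).
Qed.

End Edge.

Theorem theorem2 (R : realType) (d : nat) (psi : tri_state R d) :
  normalized psi -> entangled_AB_C psi ->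
  exists P Q : bool -> bool -> 'M[R[i]]_2,
    (forall x, projective_meas (fun a => P a x)) /\
    (forall y, projective_meas (fun b => Q b y)) /\
    on_edge (induced_assemblage psi P Q).
Proof.
move=> psi_normed psi_ent; exists (zx_proj R), (zx_proj R).
split; [exact: zx_proj_meas | split; [exact: zx_proj_meas |]].
exact: zx_assemblage_on_edge psi_normed psi_ent.
Qed.
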